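(* Let $\alpha: I\to M$ be a unit-speed curve on an oriented surface $M\subset E^3$ with Darboux frame $\{T,V,U\}$ and curvatures $k_g,k_n,\tau_g$. Consider the curve $\gamma$ defined in either of the following two cases: (a) $k_n\equiv0$, $k_g$ and $\tau_g$ nowhere zero, and $\gamma(s)=\alpha(s)+\frac{1}{k_g(s)}V(s)-\frac{k_g'(s)}{k_g(s)^2\tau_g(s)}U(s)$; (b) $k_n$ nowhere zero, $\beta$ an antiderivative of $k_g\tau_g/k_n$, $B$ an antiderivative of $e^{\beta}\tau_g/k_n$, $c_8$ a real constant, $y_2=e^{-\beta}(B+c_8)$, $y_3=-\frac{k_g}{k_n}y_2+\frac{1}{k_n}$, and $\gamma(s)=\alpha(s)+y_2(s)V(s)+y_3(s)U(s)$. In either case assume $\gamma$ is regular. Then $\gamma$ is a general helix if and only if $\alpha$ is an isophote curve on $M$.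
   Context: $M$ is an oriented surface in Euclidean 3-space $E^3$ and $\alpha:I\to M$ is a unit-speed curve with arc-length parameter $s$. Its Darboux frame $\{T,V,U\}$ consists of the unit tangent $T=\alpha'$, the unit surface normal $U$ of $M$ along $\alpha$, and $V=U\times T$; it satisfies $T'=k_gV+k_nU$, $V'=-k_gT+\tau_gU$, $U'=-k_nT-\tau_gV$, where $k_g,k_n,\tau_g$ are the geodesic curvature, normal curvature and geodesic torsion. A regular curve is a general helix if its unit tangent makes a constant angle with a fixed direction. $\alpha$ is an isophote curve if $\langle U,l\rangle$ is constant for some fixed unit vector $l$. *)

From Stdlib Require Import Reals.
From Coquelicot Require Import Coquelicot.
Open Scope R_scope.

Definition vec := (R * R * R)%type.
Definition vx (v : vec) : R := fst (fst v).
Definition vy (v : vec) : R := snd (fst v).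
Definition vz (v : vec) : R := snd v.
Definition mkv (a b c : R) : vec := (a, b, c).
Definition vzero : vec := mkv 0 0 0.
Definition vadd (u v : vec) : vec := mkv (vx u + vx v) (vy u + vy v) (vz u + vz v).
Definition vscale (a : R) (v : vec) : vec := mkv (a * vx v) (a * vy v) (a * vz v).
Definition dot (u v : vec) : R := vx u * vx v + vy u * vy v + vz u * vz v.
Definition vnorm (v : vec) : R := sqrt (dot v v).
Definition cross (u v : vec) : vec :=
  mkv (vy u * vz v - vz u * vy v)
      (vz u * vx v - vx u * vz v)
      (vx u * vy v - vy u * vx v).

Definition I_open_interval (I : R -> Prop) : Prop :=
  (exists x, I x) /\
  (forall x y z, I x -> I z -> x <= y <= z -> I y) /\
  (forall x, I x -> exists eps : posreal, forall y, Rabs (y - x) < eps -> I y).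

Definition smooth_on (I : R -> Prop) (f : R -> R) : Prop :=
  forall (n : nat) (x : R), I x -> ex_derive_n f n x.

Definition vderive (f : R -> vec) (s : R) (d : vec) : Prop :=
  is_derive (fun t => vx (f t)) s (vx d) /\
  is_derive (fun t => vy (f t)) s (vy d) /\
  is_derive (fun t => vz (f t)) s (vz d).

Definition vex_derive (f : R -> vec) (s : R) : Prop :=
  ex_derive (fun t => vx (f t)) s /\
  ex_derive (fun t => vy (f t)) s /\
  ex_derive (fun t => vz (f t)) s.

Definition vDerive (f : R -> vec) (s : R) : vec :=
  mkv (Derive (fun t => vx (f t)) s)
      (Derive (fun t => vy (f t)) s)
      (Derive (fun t => vz (f t)) s).

Definition darboux_frame (I : R -> Prop) (alpha T V U : R -> vec)
    (kg kn tg : R -> R) : Prop :=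
  forall s, I s ->
    vderive alpha s (T s) /\
    dot (T s) (T s) = 1 /\ dot (U s) (U s) = 1 /\ dot (T s) (U s) = 0 /\
    V s = cross (U s) (T s) /\
    vderive T s (vadd (vscale (kg s) (V s)) (vscale (kn s) (U s))) /\
    vderive V s (vadd (vscale (- kg s) (T s)) (vscale (tg s) (U s))) /\
    vderive U s (vadd (vscale (- kn s) (T s)) (vscale (- tg s) (V s))).

Definition regular_on (I : R -> Prop) (gamma : R -> vec) : Prop :=
  forall s, I s -> vex_derive gamma s /\ vDerive gamma s <> vzero.

Definition general_helix (I : R -> Prop) (gamma : R -> vec) : Prop :=
  exists (d : vec) (c : R), vnorm d = 1 /\
    forall s, I s ->
      dot (vscale (/ vnorm (vDerive gamma s)) (vDerive gamma s)) d = c.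

Definition isophote (I : R -> Prop) (U : R -> vec) : Prop :=
  exists (l : vec) (c : R), vnorm l = 1 /\ forall s, I s -> dot (U s) l = c.

Definition case_a (I : R -> Prop) (alpha V U : R -> vec) (kg kn tg : R -> R)
    (gamma : R -> vec) : Prop :=
  forall s, I s ->
    kn s = 0 /\ kg s <> 0 /\ tg s <> 0 /\
    gamma s = vadd (alpha s)
                (vadd (vscale (/ kg s) (V s))
                      (vscale (- (Derive kg s / (kg s ^ 2 * tg s))) (U s))).

Definition case_b (I : R -> Prop) (alpha V U : R -> vec) (kg kn tg : R -> R)
    (gamma : R -> vec) : Prop :=
  (forall s, I s -> kn s <> 0) /\
  exists (beta B : R -> R) (c8 : R),
    (forall s, I s -> is_derive beta s (kg s * tg s / kn s)) /\
    (forall s, I s -> is_derive B s (exp (beta s) * tg s / kn s)) /\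
    forall s, I s ->
      let y2 := exp (- beta s) * (B s + c8) in
      let y3 := - (kg s / kn s) * y2 + / kn s in
      gamma s = vadd (alpha s) (vadd (vscale y2 (V s)) (vscale y3 (U s))).

From Stdlib Require Import Reals Lra.
From Coquelicot Require Import Coquelicot.
Open Scope R_scope.

(* In both cases gamma = alpha + p V + q U with p kg + q kn = 1 and p' = q tg.  By the
   Darboux equations these two relations cancel the T- and V-components of gamma', so
   gamma' = (p tg + q') U, a continuous multiple of U that is nowhere zero by regularity.
   By the intermediate value theorem its sign is constant on the interval, hence the unit
   tangent of gamma is a fixed one of U or -U, and <T_gamma, d> is constant iff <U, d> is. *)

Lemma vec_eq (u v : vec) : vx u = vx v -> vy u = vy v -> vz u = vz v -> u = v.
Proof.
  destruct u as [[a b] c], v as [[a' b'] c']; unfold vx, vy, vz; simpl.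
  intros -> -> ->; reflexivity.
Qed.

Lemma dot_vscale_l (a : R) (u d : vec) : dot (vscale a u) d = a * dot u d.
Proof. unfold dot, vscale, mkv, vx, vy, vz; simpl; ring. Qed.

Lemma vnorm_vscale_unit (a : R) (u : vec) : dot u u = 1 -> vnorm (vscale a u) = Rabs a.
Proof.
  intros Hu; unfold vnorm.
  replace (dot (vscale a u) (vscale a u)) with (Rsqr a * dot u u)
    by (unfold dot, vscale, mkv, vx, vy, vz, Rsqr; simpl; ring).
  rewrite Hu, Rmult_1_r; apply sqrt_Rsqr_abs.
Qed.

Lemma vderive_vadd (f g : R -> vec) (s : R) (df dg : vec) :
  vderive f s df -> vderive g s dg ->
  vderive (fun t => vadd (f t) (g t)) s (vadd df dg).
Proof.
  intros (Hfx & Hfy & Hfz) (Hgx & Hgy & Hgz).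
  split; [| split]; [exact (is_derive_plus _ _ _ _ _ Hfx Hgx)
    | exact (is_derive_plus _ _ _ _ _ Hfy Hgy) | exact (is_derive_plus _ _ _ _ _ Hfz Hgz)].
Qed.

Lemma vderive_vscale (p : R -> R) (f : R -> vec) (s dp : R) (df : vec) :
  is_derive p s dp -> vderive f s df ->
  vderive (fun t => vscale (p t) (f t)) s (vadd (vscale dp (f s)) (vscale (p s) df)).
Proof.
  intros Hp (Hfx & Hfy & Hfz).
  split; [| split]; [exact (is_derive_mult _ _ _ _ _ Hp Hfx Rmult_comm)
    | exact (is_derive_mult _ _ _ _ _ Hp Hfy Rmult_comm)
    | exact (is_derive_mult _ _ _ _ _ Hp Hfz Rmult_comm)].
Qed.

Lemma vDerive_locally (f g : R -> vec) (s : R) (d : vec) :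
  locally s (fun t => g t = f t) -> vderive f s d -> vDerive g s = d.
Proof.
  intros Hloc (Hx & Hy & Hz).
  apply vec_eq; apply is_derive_unique; eapply is_derive_ext_loc; try eassumption;
    apply (filter_imp (fun t => g t = f t)); auto; intros t ->; reflexivity.
Qed.

Lemma locally_of_open_interval (I P : R -> Prop) (s : R) :
  I_open_interval I -> I s -> (forall t, I t -> P t) -> locally s P.
Proof.
  intros (_ & _ & Hopen) Hs HP.
  destruct (Hopen s Hs) as [eps Heps].
  exists eps; intros t Ht; apply HP, Heps, Ht.
Qed.

Lemma Rinv_Rabs_mult (a : R) : / Rabs a * a = sign a.
Proof.
  destruct (Rtotal_order a 0) as [Ha | [-> | Ha]].
  - rewrite sign_eq_m1, Rabs_left by assumption; field; lra.
  - rewrite sign_0; ring.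
  - rewrite sign_eq_1, Rabs_right by lra; field; lra.
Qed.

Lemma sign_mult_self (a : R) : a <> 0 -> sign a * sign a = 1.
Proof.
  intros Ha; destruct (Rdichotomy a 0 Ha) as [Hn | Hp].
  - rewrite sign_eq_m1 by assumption; ring.
  - rewrite sign_eq_1 by assumption; ring.
Qed.

Section ConstantSign.

Variables (I : R -> Prop) (h : R -> R).
Hypothesis I_convex : forall x y z, I x -> I z -> x <= y <= z -> I y.
Hypothesis h_cont : forall s, I s -> continuity_pt h s.
Hypothesis h_neq0 : forall s, I s -> h s <> 0.

Lemma sign_nonvanishing_lt (x y : R) : I x -> I y -> x < y -> sign (h x) = sign (h y).
Proof.
  intros Hx Hy Hxy.
  assert (no_root : forall z, x <= z <= y -> h z <> 0)
    by (intros z Hz; apply h_neq0, (I_convex x z y); auto).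
  assert (cont : forall z, x <= z <= y -> continuity_pt h z)
    by (intros z Hz; apply h_cont, (I_convex x z y); auto).
  assert (cont_opp : forall z, x <= z <= y -> continuity_pt (fun t => - h t) z)
    by (intros z Hz; apply continuity_pt_opp, cont, Hz).
  destruct (Rdichotomy _ _ (h_neq0 x Hx)) as [Hhx | Hhx],
    (Rdichotomy _ _ (h_neq0 y Hy)) as [Hhy | Hhy].
  - rewrite !sign_eq_m1; auto.
  - destruct (Ranalysis5.IVT_interv h x y cont Hxy Hhx Hhy) as [z [Hz Hz0]].
    exfalso; exact (no_root z Hz Hz0).
  - destruct (Ranalysis5.IVT_interv (fun t => - h t) x y cont_opp Hxy) as [z [Hz Hz0]];
      try lra.
    exfalso; apply (no_root z Hz); lra.
  - rewrite !sign_eq_1; auto.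
Qed.

Lemma sign_nonvanishing_const (x y : R) : I x -> I y -> sign (h x) = sign (h y).
Proof.
  intros Hx Hy; destruct (Rtotal_order x y) as [Hxy | [-> | Hxy]].
  - apply sign_nonvanishing_lt; assumption.
  - reflexivity.
  - symmetry; apply sign_nonvanishing_lt; assumption.
Qed.

End ConstantSign.

Definition tangent_along (I : R -> Prop) (gamma N : R -> vec) : Prop :=
  exists h : R -> R, (forall s, I s -> continuity_pt h s) /\
    forall s, I s -> vDerive gamma s = vscale (h s) (N s).

Lemma general_helix_iff_isophote_of_tangent_along (I : R -> Prop) (gamma U : R -> vec) :
  (exists s0, I s0) -> (forall x y z, I x -> I z -> x <= y <= z -> I y) ->
  (forall s, I s -> dot (U s) (U s) = 1) ->
  regular_on I gamma -> tangent_along I gamma U ->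
  (general_helix I gamma <-> isophote I U).
Proof.
  intros [s0 Hs0] I_convex U_unit Hreg [h [h_cont Hder]].
  assert (h_neq0 : forall s, I s -> h s <> 0).
  { intros s Hs Hh; apply (proj2 (Hreg s Hs)).
    rewrite Hder, Hh by assumption.
    apply vec_eq; unfold vscale, vzero, vx, vy, vz; simpl; ring. }
  assert (unit_tangent : forall s d, I s ->
    dot (vscale (/ vnorm (vDerive gamma s)) (vDerive gamma s)) d = sign (h s) * dot (U s) d).
  { intros s d Hs.
    rewrite Hder, vnorm_vscale_unit, !dot_vscale_l, <- Rmult_assoc, Rinv_Rabs_mult by auto.
    reflexivity. }
  assert (Hsign : forall s, I s -> sign (h s) = sign (h s0))
    by (intros s Hs; exact (sign_nonvanishing_const I h I_convex h_cont h_neq0 s s0 Hs Hs0)).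
  assert (sign_sq : sign (h s0) * sign (h s0) = 1) by (apply sign_mult_self; auto).
  split.
  - intros [d [c [Hd Hc]]]; exists d, (sign (h s0) * c); split; [assumption |].
    intros s Hs; rewrite <- (Hc s Hs), unit_tangent, (Hsign s Hs), <- Rmult_assoc, sign_sq
      by assumption.
    ring.
  - intros [l [c [Hl Hc]]]; exists l, (sign (h s0) * c); split; [assumption |].
    intros s Hs; rewrite unit_tangent, (Hsign s Hs), Hc by assumption; reflexivity.
Qed.

Lemma darboux_offset_combination (T V U : vec) (kg kn tg p q dq : R) :
  p * kg + q * kn = 1 ->
  vadd T (vadd (vadd (vscale (q * tg) V) (vscale p (vadd (vscale (- kg) T) (vscale tg U))))
               (vadd (vscale dq U) (vscale q (vadd (vscale (- kn) T) (vscale (- tg) V)))))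
  = vscale (p * tg + dq) U.
Proof.
  intros Hpq; apply vec_eq; unfold vadd, vscale, vx, vy, vz; simpl;
    match goal with |- ?tT + _ = ?c * ?tU =>
      transitivity ((1 - (p * kg + q * kn)) * tT + c * tU); [ring | rewrite Hpq; ring]
    end.
Qed.

Lemma continuity_pt_of_ex_derive (f : R -> R) (s : R) : ex_derive f s -> continuity_pt f s.
Proof. intros Hf; apply derivable_continuous_pt, ex_derive_Reals_0, Hf. Qed.

Ltac side_conditions := repeat split; try assumption;
  repeat apply Rmult_integral_contrapositive_currified; try assumption; lra.

Ltac fold_eta := repeat match goal with
  |- context [Derive (fun x => ?f x)] => change (Derive (fun x => f x)) with (Derive f) end.

Section NormalOffset.

Variables (I : R -> Prop) (alpha T V U : R -> vec) (kg kn tg : R -> R).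
Hypothesis I_open : I_open_interval I.
Hypothesis frame : darboux_frame I alpha T V U kg kn tg.

Lemma vDerive_offset_along_normal (gamma : R -> vec) (p q : R -> R) (s dq : R) :
  I s ->
  (forall t, I t ->
     gamma t = vadd (alpha t) (vadd (vscale (p t) (V t)) (vscale (q t) (U t)))) ->
  is_derive p s (q s * tg s) -> is_derive q s dq -> p s * kg s + q s * kn s = 1 ->
  vDerive gamma s = vscale (p s * tg s + dq) (U s).
Proof.
  intros Hs Hgamma Hp Hq Hpq.
  destruct (frame s Hs) as (Halpha & _ & _ & _ & _ & _ & HV & HU).
  rewrite <- (darboux_offset_combination (T s) (V s) (U s) _ _ _ _ _ dq Hpq).
  apply vDerive_locally with
    (f := fun t => vadd (alpha t) (vadd (vscale (p t) (V t)) (vscale (q t) (U t)))).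
  - exact (locally_of_open_interval I _ s I_open Hs Hgamma).
  - apply vderive_vadd; [exact Halpha |].
    apply vderive_vadd; apply vderive_vscale; assumption.
Qed.

Hypothesis kg_smooth : smooth_on I kg.
Hypothesis kn_smooth : smooth_on I kn.
Hypothesis tg_smooth : smooth_on I tg.

Lemma case_a_tangent_along (gamma : R -> vec) :
  case_a I alpha V U kg kn tg gamma -> tangent_along I gamma U.
Proof.
  intros Ha.
  pose (dq := fun t => - ((Derive (Derive kg) t * (kg t ^ 2 * tg t)
                 - Derive kg t * (2 * kg t * Derive kg t * tg t + kg t ^ 2 * Derive tg t))
                 / (kg t ^ 2 * tg t) ^ 2)).
  exists (fun t => / kg t * tg t + dq t); split; intros s Hs;
    destruct (Ha s Hs) as (kn0 & kg_neq0 & tg_neq0 & _);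
    assert (d1kg : ex_derive kg s) by exact (kg_smooth 1%nat s Hs);
    assert (d2kg : ex_derive (Derive kg) s) by exact (kg_smooth 2%nat s Hs);
    assert (d1tg : ex_derive tg s) by exact (tg_smooth 1%nat s Hs).
  - assert (d3kg : ex_derive (Derive (Derive kg)) s) by exact (kg_smooth 3%nat s Hs).
    assert (d2tg : ex_derive (Derive tg) s) by exact (tg_smooth 2%nat s Hs).
    apply continuity_pt_of_ex_derive; unfold dq; auto_derive; side_conditions.
  - apply (vDerive_offset_along_normal gamma (fun t => / kg t)
             (fun t => - (Derive kg t / (kg t ^ 2 * tg t)))).
    + assumption.
    + intros t Ht; apply (Ha t Ht).
    + auto_derive; [side_conditions |]; fold_eta; field; auto.
    + auto_derive; [side_conditions |]; fold_eta; unfold dq; field; auto.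
    + rewrite kn0; field; split; assumption.
Qed.

Lemma case_b_tangent_along (gamma : R -> vec) :
  case_b I alpha V U kg kn tg gamma -> tangent_along I gamma U.
Proof.
  intros (kn_neq0 & beta & B & c8 & Hbeta & HB & Hgamma).
  pose (p := fun t => exp (- beta t) * (B t + c8)).
  pose (q := fun t => - (kg t / kn t) * p t + / kn t).
  (* [dq] is q', with p' already replaced by q tg. *)
  pose (dq := fun t => - ((Derive kg t * kn t - kg t * Derive kn t) / kn t ^ 2) * p t
                       - kg t / kn t * (q t * tg t) - Derive kn t / kn t ^ 2).
  exists (fun t => p t * tg t + dq t); split; intros s Hs;
    pose proof (kn_neq0 s Hs) as kn_s;
    assert (dbeta : ex_derive beta s) by (eexists; apply Hbeta, Hs);
    assert (dB : ex_derive B s) by (eexists; apply HB, Hs);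
    assert (d1kg : ex_derive kg s) by exact (kg_smooth 1%nat s Hs);
    assert (d1kn : ex_derive kn s) by exact (kn_smooth 1%nat s Hs);
    assert (d1tg : ex_derive tg s) by exact (tg_smooth 1%nat s Hs).
  - assert (d2kg : ex_derive (Derive kg) s) by exact (kg_smooth 2%nat s Hs).
    assert (d2kn : ex_derive (Derive kn) s) by exact (kn_smooth 2%nat s Hs).
    apply continuity_pt_of_ex_derive; unfold dq, q, p; auto_derive; side_conditions.
  - apply (vDerive_offset_along_normal gamma p q).
    + assumption.
    + intros t Ht; exact (Hgamma t Ht).
    + unfold q, p; auto_derive; [side_conditions |]; fold_eta.
      rewrite (is_derive_unique _ _ _ (Hbeta s Hs)), (is_derive_unique _ _ _ (HB s Hs)),
        !exp_Ropp.
      field; split; try assumption; apply Rgt_not_eq, exp_pos.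
    + unfold dq, q, p; auto_derive; [side_conditions |]; fold_eta.
      rewrite (is_derive_unique _ _ _ (Hbeta s Hs)), (is_derive_unique _ _ _ (HB s Hs)),
        !exp_Ropp.
      field; split; try assumption; apply Rgt_not_eq, exp_pos.
    + unfold q; field; assumption.
Qed.

End NormalOffset.

Theorem theorem3p24 (I : R -> Prop) (alpha T V U gamma : R -> vec)
    (kg kn tg : R -> R) :
  I_open_interval I ->
  smooth_on I kg -> smooth_on I kn -> smooth_on I tg ->
  darboux_frame I alpha T V U kg kn tg ->
  (case_a I alpha V U kg kn tg gamma \/ case_b I alpha V U kg kn tg gamma) ->
  regular_on I gamma ->
  (general_helix I gamma <-> isophote I U).
Proof.
  intros I_open kg_smooth kn_smooth tg_smooth frame Hcase Hreg.
  assert (along_normal : tangent_along I gamma U).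
  { destruct Hcase as [Ha | Hb].
    - exact (case_a_tangent_along I alpha T V U kg kn tg I_open frame
               kg_smooth tg_smooth gamma Ha).
    - exact (case_b_tangent_along I alpha T V U kg kn tg I_open frame
               kg_smooth kn_smooth tg_smooth gamma Hb). }
  destruct I_open as (nonempty & convex & _).
  apply general_helix_iff_isophote_of_tangent_along; try assumption.
  intros s Hs; apply (frame s Hs).
Qed.
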